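(* Let $d_m\ge1$, let $n,k$ be integers with $k\ge\ell(d_m)$ and $n\ge k+\ell(d_m)+2d_m$, let $n'=n-k-\ell(d_m)-2d_m$, and let $\mathcal C_2(n,k,1,d_m)=\{0^k\vec u1^{d_m}\vec c1^{d_m}:\vec c\in\mathcal C_H\}$, where $\mathcal C_H\subseteq\{0,1\}^{n'}$ is any code all of whose words are $(d_m,k)$-WWL vectors. Then $\mathcal C_2(n,k,1,d_m)$ is prefix synchronized with the set $H=\{0^k\vec u\}$ and index $\rho=d_m$.
   Context: Binary alphabet; juxtaposition is concatenation; $(\vec x)_i^j=(x_i,\dots,x_j)$; $d_H$ is Hamming distance. A vector of length $m$ is a $(d,k)$-WWL vector if $m<k$ or every window of $k$ consecutive entries has Hamming weight at least $d$. $\ell(d)=d\lceil\log_2 d\rceil+d$ and $\vec u=1^d\vec u_0\cdots\vec u_{\lceil\log_2 d\rceil-1}\in\{0,1\}^{\ell(d)}$, where $\vec u_i$ is the length-$d$ prefix of $(1^{2^i}0^{2^i})^d$; here $d=d_m$. A code $\mathcal C\subseteq\{0,1\}^n$ is prefix synchronized with a set $H\subseteq\{0,1\}^m$ ($m\le n$) and index $\rho$ if for all $\vec a\in\mathcal C$, $\vec h\in H$ and $i\in[2,n]$, $d_H((\vec a\vec h)_i^{i+m-1},\vec h)\ge\rho$. *)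

(* Binary vectors are modelled as bit sequences (seq bool);
   a code is a predicate on seq bool. Indices in [window] are 1-based as in the paper. *)
From mathcomp Require Import all_boot.
Set Implicit Arguments. Unset Strict Implicit. Unset Printing Implicit Defensive.

Definition dH (x y : seq bool) : nat := count (fun p => p.1 != p.2) (zip x y).

Definition wt (x : seq bool) : nat := count id x.

Definition window (x : seq bool) (i m : nat) : seq bool := take m (drop i.-1 x).

Definition WWL (d k : nat) (x : seq bool) : Prop :=
  size x < k \/ (forall i, 1 <= i -> i + k - 1 <= size x -> d <= wt (window x i k)).

Definition ell (d : nat) : nat := d * up_log 2 d + d.

Definition ui (d i : nat) : seq bool :=
  take d (flatten (nseq d (nseq (2 ^ i) true ++ nseq (2 ^ i) false))).

Definition uvec (d : nat) : seq bool :=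
  nseq d true ++ flatten [seq ui d i | i <- iota 0 (up_log 2 d)].

Definition C2 (k d : nat) (CH : seq bool -> Prop) (a : seq bool) : Prop :=
  exists c, CH c /\ a = nseq k false ++ uvec d ++ nseq d true ++ c ++ nseq d true.

Definition prefix_synchronized (n m : nat) (C H : seq bool -> Prop) (rho : nat) : Prop :=
  (forall a, C a -> size a = n) /\ (forall h, H h -> size h = m) /\ m <= n /\
  forall a h i, C a -> H h -> 2 <= i <= n -> rho <= dH (window (a ++ h) i m) h.

From mathcomp Require Import all_boot zify.
Set Implicit Arguments. Unset Strict Implicit.

(* Put the codeword and H = 0^k u side by side and compare H with the window at shift s.
   Every shift produces at least d_m disagreements from three sources: runs of ones of the
   codeword (the prefix 1^d of u, or one of the guards 1^d around the payload) lying against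
   the block 0^k of H; the WWL property of the payload, which survives adding the guards;
   and, when u is compared with a shift of itself by 0 < r < d, its autocorrelation: writing
   r = (2m+1) 2^b, the block u_b, which tests whether binary digit b is 0, disagrees with its
   own r-shift on all d - r overlapping positions.  The few missing disagreements near the end
   of the codeword come from the blocks u_i, each of weight at least d/2. *)

Section CountIota.
Variable P : pred nat.

Lemma count_iota_shift a b :
  count P (iota a b) = count (fun y => P (a + y)) (iota 0 b).
Proof. by rewrite -{1}(addn0 a) iotaDl count_map. Qed.

Lemma eq_count_iota (Q : pred nat) a b :
  (forall j, a <= j < a + b -> P j = Q j) -> count P (iota a b) = count Q (iota a b).
Proof. by move=> PQ; apply: eq_in_count => j; rewrite mem_iota; apply: PQ. Qed.

Lemma count_iota_all a b :
  (forall j, a <= j < a + b -> P j) -> count P (iota a b) = b.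
Proof.
move=> Pab; rewrite -[RHS](size_iota a b) -count_predT.
by apply: eq_in_count => j; rewrite mem_iota => /Pab.
Qed.

Lemma count_iota_cut a b m : m <= b ->
  count P (iota a b) = count P (iota a m) + count P (iota (a + m) (b - m)).
Proof. by move=> le_mb; rewrite -count_cat -iotaD subnKC. Qed.

Lemma count_iota_sub a b a' b' : a <= a' -> a' + b' <= a + b ->
  count P (iota a' b') <= count P (iota a b).
Proof.
move=> le_a le_b; have -> : b = (a' - a) + b' + (a + b - (a' + b')) by lia.
rewrite !iotaD !count_cat subnKC //; lia.
Qed.

Lemma count_iota_sub2 a1 b1 a2 b2 N : a1 + b1 <= a2 -> a2 + b2 <= N ->
  count P (iota a1 b1) + count P (iota a2 b2) <= count P (iota 0 N).
Proof.
move=> le12 le2N; apply: leq_trans (count_iota_sub (a' := a1) (b' := a2 + b2 - a1) _ _);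
  [|lia|lia].
have -> : a2 + b2 - a1 = b1 + (a2 - (a1 + b1)) + b2 by lia.
rewrite !iotaD !count_cat.
have -> : a1 + (b1 + (a2 - (a1 + b1))) = a2 by lia.
lia.
Qed.

End CountIota.

Lemma size_flatten_uniform (T : Type) D (ss : seq (seq T)) :
  all (fun s => size s == D) ss -> size (flatten ss) = size ss * D.
Proof.
elim: ss => [|s ss IH] //= /andP[/eqP Hs Ha]; rewrite size_cat Hs IH //; lia.
Qed.

Lemma nth_flatten_uniform (T : Type) (x0 : T) D (ss : seq (seq T)) y :
  0 < D -> all (fun s => size s == D) ss -> y < size ss * D ->
  nth x0 (flatten ss) y = nth x0 (nth [::] ss (y %/ D)) (y %% D).
Proof.
move=> D_gt0; elim: ss y => [|s ss IH] y /=; first by rewrite mul0n.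
move=> /andP[/eqP Hs Ha] Hy; rewrite nth_cat Hs.
have [y_lt_D|D_le_y] := ltnP y D; first by rewrite divn_small // modn_small.
have Ey : y = 1 * D + (y - D) by lia.
by rewrite {2 3}Ey divnMDl // modnMDl add1n /= IH //; lia.
Qed.

Definition zero_digit (i z : nat) : bool := ~~ odd (z %/ 2 ^ i).

Lemma ltn_mod_double P z : 0 < P -> (z %% (P + P) < P) = ~~ odd (z %/ P).
Proof.
move=> P_gt0; rewrite {2}(divn_eq z (P + P)).
have : z %% (P + P) < P + P by apply: ltn_pmod; lia.
set q := z %/ (P + P); set r := z %% (P + P) => r_lt.
have -> : q * (P + P) + r = (q * 2) * P + r by lia.
rewrite divnMDl // oddD oddM andbF /=.
have [r_lt_P|P_le_r] := ltnP r P; first by rewrite divn_small.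
have -> : r = 1 * P + (r - P) by lia.
by rewrite divnMDl // divn_small //; lia.
Qed.

Lemma size_ui d i : size (ui d i) = d.
Proof.
rewrite /ui size_take (@size_flatten_uniform _ (2 ^ i + 2 ^ i)) ?size_nseq.
  by have := expn_gt0 2 i; case: ifP => //; nia.
by apply/allP => s /nseqP[-> _]; rewrite size_cat !size_nseq.
Qed.

Lemma nth_ui d i z : z < d -> nth false (ui d i) z = zero_digit i z.
Proof.
move=> z_lt_d; have pow_gt0 : 0 < 2 ^ i by rewrite expn_gt0.
have blocks : all (fun s => size s == 2 ^ i + 2 ^ i)
    (nseq d (nseq (2 ^ i) true ++ nseq (2 ^ i) false)).
  by apply/allP => s /nseqP[-> _]; rewrite size_cat !size_nseq.
rewrite /ui nth_take // (nth_flatten_uniform _ _ blocks); last 2 first.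
- lia.
- by rewrite size_nseq; nia.
rewrite nth_nseq (leq_ltn_trans (leq_div _ _) z_lt_d) nth_cat size_nseq.
rewrite /zero_digit -ltn_mod_double //.
by case: ifP => lt; rewrite nth_nseq ?lt ?if_same.
Qed.

Lemma odd_mul_pow2 r : 0 < r -> exists b m, r = (2 * m + 1) * 2 ^ b.
Proof.
elim/ltn_ind: r => r IH r_gt0; have := odd_double_half r; rewrite -muln2.
case: (odd r) => Er.
  by exists 0, r./2; rewrite expn0 muln1; lia.
have [b [m Ehalf]] := IH r./2 (ltac:(lia)) (ltac:(lia)).
by exists b.+1, m; rewrite expnS; lia.
Qed.

Lemma zero_digit_flip b m z :
  zero_digit b (z + (2 * m + 1) * 2 ^ b) = ~~ zero_digit b z.
Proof.
by rewrite /zero_digit addnC divnMDl ?expn_gt0 // oddD oddD oddM /=; case: odd.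
Qed.

Lemma count_zero_digit i d : d <= 2 * count (zero_digit i) (iota 0 d).
Proof.
have pow_gt0 : 0 < 2 ^ i by rewrite expn_gt0.
have low_zero j : j < 2 ^ i -> zero_digit i j by move=> ?; rewrite /zero_digit divn_small.
elim/ltn_ind: d => d IH.
have [d_small|d_big] := leqP d (2 ^ i + 2 ^ i).
  have := count_iota_sub (zero_digit i) (a := 0) (b := d) (a' := 0) (b' := minn d (2 ^ i)).
  by rewrite count_iota_all => [|j ?]; [lia|apply: low_zero; lia].
have -> : d = (2 ^ i + 2 ^ i) + (d - (2 ^ i + 2 ^ i)) by lia.
rewrite iotaD count_cat add0n (count_iota_shift _ (2 ^ i + 2 ^ i)).
have period y : zero_digit i (2 ^ i + 2 ^ i + y) = zero_digit i y.
  by rewrite /zero_digit addnn -mul2n divnMDl // oddD.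
rewrite (eq_count period).
have := count_iota_sub (zero_digit i) (a := 0) (b := 2 ^ i + 2 ^ i) (a' := 0) (b' := 2 ^ i).
rewrite count_iota_all => [|j ?]; last by apply: low_zero; lia.
have := IH (d - (2 ^ i + 2 ^ i)) (ltac:(lia)); lia.
Qed.

Lemma leq_ell d : d <= ell d.
Proof. rewrite /ell; lia. Qed.

Section UVector.
Variable d : nat.
Local Notation u := (nth false (uvec d)).
Local Notation p := (up_log 2 d).

Lemma all_size_ui q : all (fun s => size s == d) [seq ui d i | i <- iota 0 q].
Proof. by apply/allP => s /mapP[i _ ->]; rewrite size_ui. Qed.

Lemma size_uvec : size (uvec d) = ell d.
Proof.
rewrite size_cat size_nseq (size_flatten_uniform (all_size_ui _)) size_map size_iota.
by rewrite /ell addnC mulnC.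
Qed.

Lemma nth_uvec_ones y : y < d -> u y = true.
Proof. by move=> y_lt_d; rewrite nth_cat size_nseq y_lt_d nth_nseq y_lt_d. Qed.

Lemma nth_uvec_block i z : i < p -> z < d -> u (d + i * d + z) = zero_digit i z.
Proof.
move=> i_lt_p z_lt_d; rewrite nth_cat size_nseq ifF; last by lia.
have -> : d + i * d + z - d = i * d + z by lia.
rewrite (nth_flatten_uniform _ _ (all_size_ui _)) ?size_map ?size_iota; [|lia|nia].
rewrite divnMDl ?(divn_small z_lt_d) ?addn0; last by lia.
rewrite modnMDl (modn_small z_lt_d) (nth_map 0) ?size_iota //.
by rewrite nth_iota // nth_ui.
Qed.

Lemma uvec_autocorrelation r : 0 < r -> r < d ->
  d - r <= count (fun y => u y != u (y + r)) (iota 0 (ell d - r)).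
Proof.
move=> r_gt0 r_lt_d; have [b [m Er]] := odd_mul_pow2 r_gt0.
have b_lt_p : b < p.
  rewrite ltnNge; apply/negP => p_le_b.
  have := up_logP d (isT : 1 < 2); have : 2 ^ p <= 2 ^ b by rewrite leq_exp2l.
  have : 2 ^ b <= r by rewrite Er leq_pmull; lia.
  lia.
apply: leq_trans (count_iota_sub _ (a' := d + b * d) (b' := d - r) _ _); [|lia|].
  rewrite count_iota_all // => j /andP[j_ge j_lt].
  have [z -> z_lt] : exists2 z, j = d + b * d + z & z < d - r.
    by exists (j - (d + b * d)); lia.
  rewrite -[d + b * d + z + r]addnA !nth_uvec_block; [|lia..].
  by rewrite Er zero_digit_flip; case: zero_digit.
rewrite /ell; nia.
Qed.

Lemma uvec_blocks_weight t j : 0 < d -> j + t = p ->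
  t * d <= 2 * count u (iota (d + j * d) (t * d)).
Proof.
move=> d_gt0; elim: t j => [|t IH] j Ejt; first by rewrite mul0n.
rewrite mulSn iotaD count_cat mulnDr.
have -> : d + j * d + d = d + j.+1 * d by rewrite mulSn; lia.
have := IH j.+1 (ltac:(lia)); rewrite (count_iota_shift _ (d + j * d) d).
have -> : count (fun y => u (d + j * d + y)) (iota 0 d) = count (zero_digit j) (iota 0 d).
  by apply: eq_in_count => y; rewrite mem_iota => /andP[_ y_lt]; rewrite nth_uvec_block //; lia.
have := count_zero_digit j d; lia.
Qed.

Lemma exp2_lt_up_log k : 2 ^ k < d -> k < p.
Proof.
move=> lt_d; rewrite -(ltn_exp2l _ _ (isT : 1 < 2)).
exact: leq_trans lt_d (up_logP d (isT : 1 < 2)).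
Qed.

Lemma uvec_weight_after_ones : 0 < d -> d - 1 <= count u (iota d (ell d - d)).
Proof.
move=> d_gt0; have := uvec_blocks_weight (j := 0) d_gt0 erefl.
rewrite mul0n addn0 (_ : ell d - d = p * d); last by rewrite /ell; lia.
have [d_le2|d_gt2] := leqP d 2.
  by have := up_logP d (isT : 1 < 2); case: p => [|p'] /=; rewrite ?expn0; nia.
have := @exp2_lt_up_log 1 d_gt2; nia.
Qed.

Lemma double_le_ell : 1 < d -> 2 * d <= ell d.
Proof.
move=> d_gt1; have : 0 < p by rewrite up_log_gt0 d_gt1.
by rewrite /ell; nia.
Qed.

Lemma uvec_weight_after_two_blocks : 1 < d ->
  d - 2 <= count u (iota (2 * d) (ell d - 2 * d)).
Proof.
move=> d_gt1; have p_gt0 : 0 < p by rewrite up_log_gt0 d_gt1.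
have := uvec_blocks_weight (t := p.-1) (j := 1) (ltac:(lia)) (ltac:(lia)).
rewrite mul1n (_ : ell d - 2 * d = p.-1 * d); last by rewrite /ell; case: p p_gt0 => //= p' _; nia.
rewrite addnn -mul2n.
have [d_le4|d_gt4] := leqP d 4.
  by have [d2|d_gt2] := leqP d 2; [lia|have := @exp2_lt_up_log 1 d_gt2; nia].
have := @exp2_lt_up_log 2 d_gt4; nia.
Qed.

End UVector.

Lemma window_nth x i m : i.-1 + m <= size x ->
  window x i m = [seq nth false x j | j <- iota i.-1 m].
Proof.
move=> fits; apply: (@eq_from_nth _ false).
  by rewrite size_map size_iota /window size_take size_drop; case: ifP; lia.
move=> j; rewrite /window size_take size_drop => j_lt.
have j_lt_m : j < m by move: j_lt; case: ifP; lia.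
by rewrite nth_take // nth_drop (nth_map 0) ?size_iota // nth_iota.
Qed.

Lemma dH_map (T : Type) (f g : T -> bool) s :
  dH (map f s) (map g s) = count (fun j => f j != g j) s.
Proof. by rewrite /dH zip_map count_map. Qed.

Lemma WWL_count d k x : WWL d k x ->
  size x < k \/ forall z, z + k <= size x -> d <= count (nth false x) (iota z k).
Proof.
case=> [|W]; [by left|right => z fits].
by have := W z.+1 isT (ltac:(lia)); rewrite /wt window_nth //= count_map.
Qed.

Lemma count_window_pad_ones d k c z : d <= k <= size c ->
  (forall z, z + k <= size c -> d <= count (nth false c) (iota z k)) ->
  z + k <= d + size c + d ->
  d <= count (nth false (nseq d true ++ c ++ nseq d true)) (iota z k).
Proof.
move=> /andP[d_le_k k_le_c] W fits.
set T := nseq d true ++ c ++ nseq d true.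
have nthT x : nth false T x =
    if x < d then true else if x < d + size c then nth false c (x - d) else x < d + size c + d.
  rewrite /T !nth_cat !size_nseq !nth_nseq.
  by repeat case: ifP => ?; try lia; rewrite ?(nth_default _ (_ : size c <= _)) //; lia.
have inner z' m : d + z' + m <= d + size c ->
    count (nth false T) (iota (d + z') m) = count (nth false c) (iota z' m).
  move=> z'_fits; rewrite iotaDl count_map; apply: eq_in_count => y.
  by rewrite mem_iota /= nthT => /andP[? ?]; do 2 (case: ifP => ?; try lia); congr nth; lia.
have [z_lt_d|d_le_z] := ltnP z d.
  have := W 0 (ltac:(lia)); rewrite (count_iota_cut _ _ (m := k - (d - z))) ?add0n; last by lia.
  have := count_size (nth false c) (iota (k - (d - z)) (k - (k - (d - z)))).
  rewrite size_iota [count _ (iota z k)](count_iota_cut _ _ (m := d - z)); last by lia.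
  rewrite [count _ (iota z _)]count_iota_all => [|j ?]; last by rewrite nthT; case: ifP => //; lia.
  rewrite (_ : z + (d - z) = d + 0) ?inner; lia.
have [inside|overflow] := leqP (z + k) (d + size c).
  by rewrite -(subnKC d_le_z) inner ?subnKC //; apply: W; lia.
set e := z + k - (d + size c).
have := W (size c - k) (ltac:(lia)).
rewrite (count_iota_cut _ _ (m := e)); last by lia.
rewrite (_ : size c - k + e = z - d); last by lia.
have := count_size (nth false c) (iota (size c - k) e); rewrite size_iota.
rewrite [count _ (iota z k)](count_iota_cut _ _ (m := k - e)); last by lia.
rewrite [count _ (iota (z + _) _)]count_iota_all => [|j ?]; last first.
  by rewrite nthT; repeat case: ifP => ?; try lia.
rewrite -{2}(subnKC d_le_z) inner; lia.
Qed.

Definition header d k := nseq k false ++ uvec d.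

Definition codeword d k (c : seq bool) :=
  nseq k false ++ uvec d ++ nseq d true ++ c ++ nseq d true.

Definition mismatch d k c s j :=
  nth false (codeword d k c ++ header d k) (s + j) != nth false (header d k) j.

Lemma size_header d k : size (header d k) = k + ell d.
Proof. by rewrite size_cat size_nseq size_uvec. Qed.

Lemma size_codeword d k c : size (codeword d k c) = k + ell d + d + size c + d.
Proof.
by rewrite /codeword size_cat size_nseq size_cat size_uvec !size_cat !size_nseq; lia.
Qed.

Lemma nth_header d k j :
  nth false (header d k) j = if j < k then false else nth false (uvec d) (j - k).
Proof. by rewrite nth_cat size_nseq nth_nseq; case: ltnP. Qed.

Lemma nth_codeword_header d k c x : nth false (codeword d k c ++ header d k) x =
  if x < k then false else if x < k + ell d then nth false (uvec d) (x - k)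
  else if x < k + ell d + d then true
  else if x < k + ell d + d + size c then nth false c (x - (k + ell d + d))
  else if x < k + ell d + d + size c + d then true
  else if x < k + ell d + d + size c + d + k then false
  else nth false (uvec d) (x - (k + ell d + d + size c + d + k)).
Proof.
rewrite /codeword /header; have := size_uvec d; move: (uvec d) (ell d) => u L size_u.
rewrite !nth_cat !size_cat !size_nseq size_u !nth_nseq.
by repeat case: ifP => ?; try lia; congr nth; lia.
Qed.

Section Mismatches.
Variables (d k : nat) (c : seq bool).
Hypotheses (d_gt0 : 0 < d) (ell_le_k : ell d <= k).

Local Notation N := (k + ell d + d + size c + d).
Local Notation u := (nth false (uvec d)).
Local Notation dist s := (count (mismatch d k c s) (iota 0 (k + ell d))).

Local Ltac eval_nth :=
  rewrite /mismatch ?nth_codeword_header ?nth_header;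
  repeat case: ifP => ?; try lia; try done.

Local Ltac congr_nth := first
  [ congr (~~ (nth _ _ _ == nth _ _ _)); lia
  | rewrite eq_sym; congr (~~ (nth _ _ _ == nth _ _ _)); lia ].

Let d_le_ell := leq_ell d.

Lemma dist_shift_lt_k s : 0 < s < k -> d <= dist s.
Proof.
move=> /andP[s_gt0 s_lt_k]; have [d_le_s|s_lt_d] := leqP d s.
  apply: leq_trans (count_iota_sub _ (a' := k - s) (b' := d) _ _); [|lia..].
  by rewrite count_iota_all // => j ?; eval_nth; rewrite nth_uvec_ones //; lia.
apply: leq_trans (count_iota_sub2 _ (a1 := k - s) (b1 := s) (a2 := k) (b2 := ell d - s) _ _);
  [|lia..].
rewrite count_iota_all => [|j ?]; last by eval_nth; rewrite nth_uvec_ones //; lia.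
rewrite count_iota_shift (eq_count_iota (Q := fun y => u y != u (y + s))).
  by have := uvec_autocorrelation s_gt0 s_lt_d; lia.
by move=> y ?; eval_nth; congr_nth.
Qed.

Lemma dist_shift_in_uvec s : k <= s -> s < k + ell d -> d <= dist s.
Proof.
move=> k_le_s s_lt; have [s_lt_kd|kd_le_s] := ltnP s (k + d).
  apply: leq_trans (count_iota_sub2 _ (a1 := 0) (b1 := d - (s - k))
    (a2 := ell d - (s - k)) (b2 := s - k) _ _); [|lia..].
  rewrite !count_iota_all => [|j ?|j ?]; [lia|eval_nth|eval_nth].
  by rewrite nth_uvec_ones //; lia.
apply: leq_trans (count_iota_sub _ (a' := ell d - (s - k)) (b' := d) _ _); [|lia..].
by rewrite count_iota_all // => j ?; eval_nth.
Qed.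

Lemma dist_tail_ones_in_zeros s : s + d <= N -> N <= s + k -> d <= dist s.
Proof.
move=> s_le N_le; apply: leq_trans (count_iota_sub _ (a' := N - d - s) (b' := d) _ _); [|lia..].
by rewrite count_iota_all // => j ?; eval_nth.
Qed.

Lemma dist_shift_near_end s : N < s + d -> s < N -> d <= dist s.
Proof.
move=> N_lt s_lt_N; move Er : (N - s) => r.
apply: leq_trans (count_iota_sub2 _ (a1 := 0) (b1 := r) (a2 := k + r) (b2 := ell d - r) _ _);
  [|lia..].
rewrite [count _ (iota 0 r)]count_iota_all => [|j ?]; last by eval_nth.
rewrite count_iota_shift (eq_count_iota (Q := fun y => u y != u (y + r))).
  by have := uvec_autocorrelation (d := d) (r := r) (ltac:(lia)) (ltac:(lia)); lia.
by move=> y ?; eval_nth; congr_nth.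
Qed.

Lemma dist_shift_in_long_tail s : k <= size c ->
  (forall z, z + k <= size c -> d <= count (nth false c) (iota z k)) ->
  k + ell d <= s -> s + k < N -> d <= dist s.
Proof.
move=> k_le_c W s_ge s_lt.
apply: leq_trans (count_iota_sub _ (a' := 0) (b' := k) _ _); [|lia..].
have := count_window_pad_ones (d := d) (k := k) (c := c) (z := s - (k + ell d))
  (ltac:(lia)) W (ltac:(lia)).
rewrite count_iota_shift => /leq_trans; apply; apply/eq_leq/eq_count_iota => j ?.
eval_nth; rewrite ?nth_cat ?size_nseq ?nth_nseq; repeat case: ifP => ?; try lia; try done.
by rewrite eqbF_neg negbK; congr nth; lia.
Qed.

Lemma dist_shift_in_short_tail s : size c < k ->
  k + ell d <= s -> s + k < N -> d <= dist s.
Proof.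
move=> c_lt_k s_ge s_lt; move Et : (s - (k + ell d)) => t; move Eq : (N - (s + k)) => q.
rewrite (count_iota_cut _ _ (m := k)) ?add0n; last by lia.
(* [t + q < 2 d] because the payload is shorter than [k]: the guards always put a one
   against [0^k], and two of them once [u] is compared past its second block. *)
have ones : (d - t) + (d - q) <= count (mismatch d k c s) (iota 0 k).
  apply: leq_trans (count_iota_sub2 _ (a1 := 0) (b1 := d - t)
    (a2 := k - (d - q)) (b2 := d - q) _ _); [|lia..].
  by rewrite !count_iota_all => [|j ?|j ?]; [lia|eval_nth|eval_nth].
have uvec_zeros o : q <= o <= ell d ->
    count u (iota o (ell d - o)) <= count (mismatch d k c s) (iota k (k + ell d - k)).
  move=> /andP[q_le_o o_le].
  apply: leq_trans (count_iota_sub _ (a' := k + o) (b' := ell d - o) _ _); [|lia..].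
  rewrite iotaDl count_map; apply/eq_leq/eq_count_iota => j ? /=; eval_nth.
  by rewrite eq_sym eqbF_neg negbK; congr nth; lia.
have [q_le_d|d_lt_q] := leqP q d.
  have := uvec_zeros d (ltac:(lia)); have := uvec_weight_after_ones d_gt0; lia.
have := double_le_ell (d := d) (ltac:(lia)) => two_d_le.
have := uvec_zeros (2 * d) (ltac:(lia)).
have := uvec_weight_after_two_blocks (d := d) (ltac:(lia)); lia.
Qed.

Lemma dist_ge s : 0 < s < N ->
  (size c < k \/ forall z, z + k <= size c -> d <= count (nth false c) (iota z k)) ->
  d <= dist s.
Proof.
move=> /andP[s_gt0 s_lt_N] W.
have [s_lt_k|k_le_s] := ltnP s k; first by apply: dist_shift_lt_k; rewrite s_gt0.
have [s_lt_kl|kl_le_s] := ltnP s (k + ell d); first exact: dist_shift_in_uvec.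
have [near_end|far] := ltnP N (s + d); first exact: dist_shift_near_end.
have [ends_in_zeros|s_lt] := leqP N (s + k); first exact: dist_tail_ones_in_zeros.
have [c_lt_k|k_le_c] := ltnP (size c) k; first exact: dist_shift_in_short_tail.
by apply: dist_shift_in_long_tail => //; case: W => //; lia.
Qed.

End Mismatches.

Lemma dH_window x y i m : size y = m -> i.-1 + m <= size x ->
  dH (window x i m) y =
  count (fun j => nth false x (i.-1 + j) != nth false y j) (iota 0 m).
Proof.
move=> size_y fits; rewrite window_nth // -[X in dH _ X](mkseq_nth false y) size_y.
by rewrite -[in iota i.-1 m](addn0 i.-1) iotaDl -map_comp dH_map.
Qed.

Theorem theorem9 (dm n k : nat) (CH : seq bool -> Prop) :
  1 <= dm -> ell dm <= k -> k + ell dm + 2 * dm <= n ->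
  (forall c, CH c -> size c = n - k - ell dm - 2 * dm /\ WWL dm k c) ->
  prefix_synchronized n (k + ell dm) (C2 k dm CH)
    (fun h => h = nseq k false ++ uvec dm) dm.
Proof.
move=> dm_gt0 ell_le_k n_ge CH_spec.
have size_word c : CH c -> size (codeword dm k c) = n.
  by case/CH_spec => size_c _; rewrite size_codeword; lia.
split; first by move=> _ [c [CHc ->]]; apply: size_word.
split; first by move=> _ ->; apply: size_header.
split; first lia.
move=> _ _ i [c [CHc ->]] -> /andP[i_ge2 i_le_n].
have [size_c /WWL_count W] := CH_spec c CHc.
change (dm <= dH (window (codeword dm k c ++ header dm k) i (k + ell dm)) (header dm k)).
rewrite dH_window ?size_header //; last by rewrite size_cat size_word // size_header; lia.
apply: dist_ge => //; rewrite size_c; lia.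
Qed.
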